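(* Let $R$ be a local ring (with maximal ideal $\mathcal{M}$) which is Noetherian (i.e., both left and right Noetherian). If every left $R$-module generated by two elements is a direct sum of cyclic modules, then one of the following holds: (a) $R$ is an Artinian principal left ideal ring; (b) $R$ is an Artinian principal right ideal ring; (c) $R$ is a prime ring and every two-sided ideal of $R$ is principal both as a left ideal and as a right ideal.
   Context: All rings have identity and all modules are unital. A ring $R$ is local if it has a unique maximal left ideal $\mathcal{M}$ (equivalently, $R/J(R)$ is a division ring, $\mathcal{M}=J(R)$). ''Artinian'' means both left and right Artinian; ''Noetherian'' means both left and right Noetherian. *)

From HB Require Import structures.
From mathcomp Require Import all_boot all_order all_algebra.
Set Implicit Arguments. Unset Strict Implicit. Unset Printing Implicit Defensive.
Import GRing.Theory.
Local Open Scope ring_scope.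

Section RingNotions.
Variable R : nzRingType.

Definition same_set (A B : R -> Prop) := forall x, A x <-> B x.

Definition left_ideal (I : R -> Prop) :=
  [/\ I 0, (forall x y, I x -> I y -> I (x + y)) & (forall r x, I x -> I (r * x))].

Definition right_ideal (I : R -> Prop) :=
  [/\ I 0, (forall x y, I x -> I y -> I (x + y)) & (forall r x, I x -> I (x * r))].

Definition twosided_ideal (I : R -> Prop) := left_ideal I /\ right_ideal I.

Definition maximal_left_ideal (M : R -> Prop) :=
  [/\ left_ideal M, ~ M 1 &
      forall I, left_ideal I -> (forall x, M x -> I x) -> same_set I M \/ I 1].

Definition local_ring :=
  exists M, maximal_left_ideal M /\
    forall N, maximal_left_ideal N -> same_set N M.

Definition left_noetherian :=
  forall I : nat -> R -> Prop, (forall n, left_ideal (I n)) ->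
    (forall n x, I n x -> I n.+1 x) ->
    exists n, forall m, (n <= m)%N -> same_set (I m) (I n).

Definition right_noetherian :=
  forall I : nat -> R -> Prop, (forall n, right_ideal (I n)) ->
    (forall n x, I n x -> I n.+1 x) ->
    exists n, forall m, (n <= m)%N -> same_set (I m) (I n).

Definition left_artinian :=
  forall I : nat -> R -> Prop, (forall n, left_ideal (I n)) ->
    (forall n x, I n.+1 x -> I n x) ->
    exists n, forall m, (n <= m)%N -> same_set (I m) (I n).

Definition right_artinian :=
  forall I : nat -> R -> Prop, (forall n, right_ideal (I n)) ->
    (forall n x, I n.+1 x -> I n x) ->
    exists n, forall m, (n <= m)%N -> same_set (I m) (I n).

Definition noetherian := left_noetherian /\ right_noetherian.
Definition artinian := left_artinian /\ right_artinian.

Definition principal_left (I : R -> Prop) :=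
  exists a, forall x, I x <-> exists r, x = r * a.
Definition principal_right (I : R -> Prop) :=
  exists a, forall x, I x <-> exists r, x = a * r.

Definition principal_left_ideal_ring :=
  forall I, left_ideal I -> principal_left I.
Definition principal_right_ideal_ring :=
  forall I, right_ideal I -> principal_right I.

(* prime ring: R <> 0 (automatic for nzRingType) and AB = 0 for two-sided
   ideals A, B forces A = 0 or B = 0 *)
Definition prime_ring :=
  forall A B : R -> Prop, twosided_ideal A -> twosided_ideal B ->
    (forall a b, A a -> B b -> a * b = 0) ->
    (forall a, A a -> a = 0) \/ (forall b, B b -> b = 0).

End RingNotions.

Section ModuleNotions.
Variables (R : nzRingType) (M : lmodType R).

Definition two_generated :=
  exists a b : M, forall x : M, exists r s : R, x = r *: a + s *: b.

(* M is the (internal) direct sum of the cyclic submodules R m_i *)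
Definition direct_sum_of_cyclics :=
  exists ms : seq M,
    (forall x : M, exists rs : seq R, size rs = size ms /\
        x = \sum_(i < size ms) rs`_i *: ms`_i) /\
    (forall rs : seq R, size rs = size ms ->
        \sum_(i < size ms) rs`_i *: ms`_i = 0 ->
        forall i, (i < size ms)%N -> rs`_i *: ms`_i = 0).

End ModuleNotions.

(* The maximal left ideal [J] is two-sided and everything outside [J] is a unit.
   Decomposing [R^2 / R(a, b)] into cyclic modules shows that the principal right ideals
   form a chain, so the right Noetherian ring [R] is a principal right ideal ring and
   [J = pR].  If [p] is nilpotent, the layers of [R ⊇ pR ⊇ ... ⊇ p^N R = 0] are Noetherian
   vector spaces over [R / J], hence Artinian, and [R] is Artinian on both sides.
   Otherwise [⋂ p^n R = 0] (Krull), every nonzero element is [p^k u] with [u] a unit, and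
   [R] is a domain; decomposing the image [Ra + Rb] of [(x, y) ↦ x a + y b] and using the
   Ore condition shows that [Ra + Rb] is principal, so [R] is also a principal left ideal
   ring. *)

From HB Require Import structures.
From mathcomp Require Import all_boot all_order all_algebra.
From Stdlib Require Import ClassicalEpsilon Classical FunctionalExtensionality PropExtensionality.
Set Implicit Arguments. Unset Strict Implicit. Unset Printing Implicit Defensive.
Import GRing.Theory.
Local Open Scope ring_scope.

(** * Submodules and quotient modules *)

Record submodule (R : nzRingType) (V : lmodType R) := Submodule {
  submod_mem :> V -> Prop;
  _ : [/\ submod_mem 0, forall x y, submod_mem x -> submod_mem y -> submod_mem (x + y)
       & forall r x, submod_mem x -> submod_mem (r *: x)] }.

Section Submodule.
Variables (R : nzRingType) (V : lmodType R) (N : submodule V).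

Let submodP : [/\ N 0, forall x y, N x -> N y -> N (x + y) & forall r x, N x -> N (r *: x)].
Proof. by case: N. Qed.

Lemma submod0 : N 0. Proof. by case: submodP. Qed.

Lemma submodD x y : N x -> N y -> N (x + y). Proof. by case: submodP => _ + _; apply. Qed.

Lemma submodZ r x : N x -> N (r *: x). Proof. by case: submodP => _ _; apply. Qed.

Lemma submodN x : N x -> N (- x). Proof. by rewrite -scaleN1r; apply: submodZ. Qed.

Lemma submodB x y : N x -> N y -> N (x - y).
Proof. by move=> Nx Ny; apply: submodD => //; apply: submodN. Qed.

Lemma submod_sym x y : N (x - y) -> N (y - x).
Proof. by move=> Nxy; rewrite -opprB; apply: submodN. Qed.

End Submodule.

Lemma cyclic_submodule_subproof (R : nzRingType) (V : lmodType R) (v : V) :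
  let N x := exists g, x = g *: v in
  [/\ N 0, forall x y, N x -> N y -> N (x + y) & forall r x, N x -> N (r *: x)].
Proof.
split; first by exists 0; rewrite scale0r.
- by move=> _ _ [g ->] [h ->]; exists (g + h); rewrite scalerDl.
- by move=> r _ [g ->]; exists (r * g); rewrite scalerA.
Qed.

Definition cyclic_submodule (R : nzRingType) (V : lmodType R) (v : V) :=
  Submodule (cyclic_submodule_subproof v).

Section Quotient.
Variables (R : nzRingType) (V : lmodType R) (N : submodule V).

(* The quotient V / N is realised as the type of chosen coset representatives. *)
Definition coset_repr (v : V) : V := epsilon (inhabits 0) (fun w => N (v - w)).

Lemma coset_reprP v : N (v - coset_repr v).
Proof.
apply: (epsilon_spec (inhabits 0) (fun w => N (v - w))).
by exists v; rewrite subrr; apply: submod0.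
Qed.

Lemma coset_repr_eq v w : N (v - w) -> coset_repr v = coset_repr w.
Proof.
move=> Nvw; congr epsilon; apply: functional_extensionality => x.
apply: propositional_extensionality; split => Nx.
- by rewrite -(subrKA v) addrC; apply: submodD => //; apply: submod_sym.
- by rewrite -(subrKA w) addrC; apply: submodD.
Qed.

Lemma coset_reprK v : coset_repr (coset_repr v) = coset_repr v.
Proof. by apply: coset_repr_eq; apply: submod_sym => //; apply: coset_reprP. Qed.

Definition quot := {v : V | coset_repr v == v}.
HB.instance Definition _ := Choice.on quot.

Definition qpi (v : V) : quot := exist _ (coset_repr v) (introT eqP (coset_reprK v)).

Lemma qpi_eq v w : N (v - w) -> qpi v = qpi w.
Proof. by move=> Nvw; apply: val_inj; apply: coset_repr_eq. Qed.

Lemma qpiK (q : quot) : qpi (val q) = q.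
Proof. by apply: val_inj; apply/eqP: (valP q). Qed.

Lemma qpi_reprN v : N (val (qpi v) - v).
Proof. by apply: submod_sym => //; apply: coset_reprP. Qed.

Lemma qpi_congr (f : V -> V) v :
  (forall x y, N (x - y) -> N (f x - f y)) -> qpi (f (val (qpi v))) = qpi (f v).
Proof. by move=> fN; apply: qpi_eq; apply: fN; apply: qpi_reprN. Qed.

Definition qadd (q1 q2 : quot) := qpi (val q1 + val q2).
Definition qopp (q : quot) := qpi (- val q).
Definition qscale r (q : quot) := qpi (r *: val q).

Lemma qpi_addl v w : qpi (val (qpi v) + w) = qpi (v + w).
Proof. by apply: (@qpi_congr (fun x => x + w)) => x y; rewrite (addrC y) addrKA. Qed.

Lemma qpi_addr v w : qpi (w + val (qpi v)) = qpi (w + v).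
Proof. by apply: (@qpi_congr (fun x => w + x)) => x y; rewrite (addrC w x) addrKA. Qed.

Lemma qaddA : associative qadd.
Proof. by move=> q1 q2 q3; rewrite /qadd qpi_addl qpi_addr addrA. Qed.

Lemma qaddC : commutative qadd.
Proof. by move=> q1 q2; rewrite /qadd addrC. Qed.

Lemma qadd0 : left_id (qpi 0) qadd.
Proof. by move=> q; rewrite /qadd qpi_addl add0r qpiK. Qed.

Lemma qaddN : left_inverse (qpi 0) qopp qadd.
Proof. by move=> q; rewrite /qadd /qopp qpi_addl addNr. Qed.

HB.instance Definition _ := GRing.isZmodule.Build quot qaddA qaddC qadd0 qaddN.

Lemma qpiD v w : qpi (v + w) = qpi v + qpi w.
Proof. by rewrite [RHS]qpi_addl qpi_addr. Qed.

Lemma qpi_scale r v : qpi (r *: val (qpi v)) = qpi (r *: v).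
Proof. by apply: (@qpi_congr (fun x => r *: x)) => x y Nxy; rewrite -scalerBr; apply: submodZ. Qed.

Lemma qscaleA a b q : qscale a (qscale b q) = qscale (a * b) q.
Proof. by rewrite /qscale qpi_scale scalerA. Qed.

Lemma qscale1 : left_id 1 qscale.
Proof. by move=> q; rewrite /qscale scale1r qpiK. Qed.

Lemma qscaleDr : right_distributive qscale +%R.
Proof. by move=> r q1 q2; rewrite /qscale -qpiD -scalerDr; apply: qpi_scale. Qed.

Lemma qscaleDl q : {morph qscale^~ q : a b / a + b}.
Proof. by move=> a b; rewrite /qscale -qpiD scalerDl. Qed.

HB.instance Definition _ :=
  GRing.Zmodule_isLmodule.Build R quot qscaleA qscale1 qscaleDr qscaleDl.

Lemma qpiZ r v : qpi (r *: v) = r *: qpi v.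
Proof. by rewrite -qpi_scale. Qed.

Lemma qpiB v w : qpi (v - w) = qpi v - qpi w.
Proof. by apply: (addIr (qpi w)); rewrite -qpiD !subrK. Qed.

Lemma qpi_lincomb n (c : 'I_n -> R) (q : 'I_n -> quot) :
  qpi (\sum_(j < n) c j *: val (q j)) = \sum_(j < n) c j *: q j.
Proof.
rewrite (big_morph qpi qpiD (erefl : qpi 0 = 0)).
by apply: eq_bigr => j _; rewrite qpiZ qpiK.
Qed.

Lemma qpi_eq0 v : qpi v = 0 <-> N v.
Proof.
split=> [qv0|Nv]; last by apply: qpi_eq; rewrite subr0.
have /(congr1 val) /= Ev : qpi v = qpi 0 := qv0.
by have := submodB (coset_reprP v) (coset_reprP 0); rewrite Ev sub0r opprK subrK.
Qed.

End Quotient.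

Section KernelQuotient.
Variables (R : nzRingType) (V W : lmodType R) (f : {linear V -> W}).

Lemma kernel_subproof :
  [/\ f 0 = 0, forall x y, f x = 0 -> f y = 0 -> f (x + y) = 0
    & forall r x, f x = 0 -> f (r *: x) = 0].
Proof.
split; first exact: linear0.
- by move=> x y fx0 fy0; rewrite linearD fx0 fy0 addr0.
- by move=> r x fx0; rewrite linearZ_LR fx0 scaler0.
Qed.

Definition kernel := Submodule kernel_subproof.

Definition quot_lift (q : quot kernel) : W := f (val q).

Lemma quot_lift_qpi v : quot_lift (qpi kernel v) = f v.
Proof.
by apply/eqP; rewrite -subr_eq0 -linearB; apply/eqP; apply: (qpi_reprN kernel v).
Qed.

Lemma quot_lift_is_linear : linear quot_lift.
Proof.
move=> r q q'; have := quot_lift_qpi (val (r *: q) + val q'); rewrite /quot_lift => ->.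
by have := quot_lift_qpi (r *: val q); rewrite /quot_lift linearD => ->; rewrite linearZ.
Qed.

HB.instance Definition _ := GRing.isLinear.Build R (quot kernel) W _ quot_lift
  quot_lift_is_linear.

Lemma quot_lift_eq0 q : quot_lift q = 0 -> q = 0.
Proof. by rewrite -[q]qpiK quot_lift_qpi => /(qpi_eq0 kernel). Qed.

End KernelQuotient.

Lemma sum_scale_delta (R : nzRingType) (M : lmodType R) n (F : nat -> M) i :
  (i < n)%N -> \sum_(j < n) ((j : nat) == i)%:R *: F j = F i.
Proof.
move=> lti; rewrite (bigD1 (Ordinal lti)) //= eqxx scale1r big1 ?addr0 // => j neji.
suff /negbTE-> : (j : nat) != i by rewrite scale0r.
by apply: contra neji => /eqP eji; apply/eqP/val_inj.
Qed.

Definition cyclics_direct (R : nzRingType) (M : lmodType R) (ms : seq M) :=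
  forall rs : seq R, size rs = size ms ->
    \sum_(i < size ms) rs`_i *: ms`_i = 0 -> forall i, (i < size ms)%N -> rs`_i *: ms`_i = 0.

Section DirectSum.
Variables (R : nzRingType) (M : lmodType R) (ms : seq M).
Hypothesis ms_direct : cyclics_direct ms.

Lemma direct_sum_termP (f : nat -> R) :
  \sum_(j < size ms) f j *: ms`_j = 0 -> forall i, (i < size ms)%N -> f i *: ms`_i = 0.
Proof.
move=> f0 i lti; rewrite -(nth_mkseq 0 f lti); apply: (ms_direct (size_mkseq _ _)) => //.
by rewrite -[RHS]f0; apply: eq_bigr => j _; rewrite nth_mkseq.
Qed.

Lemma direct_sum_pair i j (r s : R) : (i < size ms)%N -> (j < size ms)%N -> i != j ->
  r *: ms`_i + s *: ms`_j = 0 -> r *: ms`_i = 0.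
Proof.
move=> lti ltj neij rs0.
have := direct_sum_termP (f := fun l => (l == i)%:R * r + (l == j)%:R * s) _ lti.
rewrite eqxx (negbTE neij) mul1r mul0r addr0; apply.
under eq_bigr do rewrite scalerDl -!scalerA.
rewrite big_split /= (sum_scale_delta (fun l => r *: ms`_l) lti).
by rewrite (sum_scale_delta (fun l => s *: ms`_l) ltj).
Qed.

End DirectSum.

Lemma scaler_sum2 (R : nzRingType) (M : lmodType R) n (f g : nat -> R) (m : nat -> M) x y :
  x *: \sum_(j < n) f j *: m j + y *: \sum_(j < n) g j *: m j =
  \sum_(j < n) (x * f j + y * g j) *: m j.
Proof. by rewrite !scaler_sumr -big_split; apply: eq_bigr => j _; rewrite scalerDl !scalerA. Qed.

Section Pairs.
Variable R : nzRingType.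
Local Notation R2 := (R^o * R^o)%type.

Lemma pair_basis (x y : R) : ((x, y) : R2) = x *: (1, 0) + y *: (0, 1).
Proof.
by apply: injective_projections; rewrite /= scaler0 ?addr0 ?add0r; apply: esym; apply: mulr1.
Qed.

Lemma quot_pair_two_generated (N : submodule R2) : two_generated (quot N).
Proof.
exists (qpi N (1, 0)), (qpi N (0, 1)) => q; exists (val q).1, (val q).2.
by rewrite -!qpiZ -qpiD -pair_basis -surjective_pairing qpiK.
Qed.

End Pairs.

Definition two_generated_decomposable (R : nzRingType) :=
  forall M : lmodType R, two_generated M -> direct_sum_of_cyclics M.

Definition comb2 (R : nzRingType) (a b : R) (v : R^o * R^o) : R^o := v.1 * a + v.2 * b.

Lemma comb2_is_linear (R : nzRingType) (a b : R) : linear (comb2 a b).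
Proof. by move=> r v w; rewrite /comb2 /= !mulrDl -!scalerAl scalerDr addrACA. Qed.

HB.instance Definition _ (R : nzRingType) (a b : R) :=
  GRing.isLinear.Build R (R^o * R^o)%type R^o _ (comb2 a b) (comb2_is_linear a b).

(** * Left ideals and chain conditions *)

Section LeftIdeals.
Variable R : nzRingType.
Implicit Types (I K L : R -> Prop) (x y r : R).

Section Closure.
Variables (I : R -> Prop) (I_ideal : left_ideal I).

Lemma lideal0 : I 0. Proof. by case: I_ideal. Qed.

Lemma lidealD x y : I x -> I y -> I (x + y). Proof. by case: I_ideal => _ + _; apply. Qed.

Lemma lidealMl r x : I x -> I (r * x). Proof. by case: I_ideal => _ _; apply. Qed.

Lemma lidealN x : I x -> I (- x). Proof. by rewrite -mulN1r; apply: lidealMl. Qed.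

Lemma lidealB x y : I x -> I y -> I (x - y).
Proof. by move=> Ix Iy; apply: lidealD => //; apply: lidealN. Qed.

Lemma lideal_sum n (F : 'I_n -> R) : (forall i, I (F i)) -> I (\sum_(i < n) F i).
Proof. by move=> IF; apply: big_ind => //; [apply: lideal0 | apply: lidealD]. Qed.

End Closure.

Definition lspan1 x := fun z => exists r, z = r * x.

Lemma left_ideal_lspan1 x : left_ideal (lspan1 x).
Proof.
split; first by exists 0; rewrite mul0r.
- by move=> _ _ [r ->] [s ->]; exists (r + s); rewrite mulrDl.
- by move=> r _ [s ->]; exists (r * s); rewrite mulrA.
Qed.

Lemma left_ideal_add I K : left_ideal I -> left_ideal K ->
  left_ideal (fun x => exists y z, [/\ I y, K z & x = y + z]).
Proof.
move=> I_ideal K_ideal; split.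
- by exists 0, 0; rewrite addr0; split; [apply: (lideal0 I_ideal) | apply: (lideal0 K_ideal) |].
- move=> _ _ [y1 [z1 [I1 K1 ->]]] [y2 [z2 [I2 K2 ->]]]; exists (y1 + y2), (z1 + z2).
  by rewrite addrACA; split; [apply: (lidealD I_ideal) | apply: (lidealD K_ideal) |].
- move=> r _ [y [z [Iy Kz ->]]]; exists (r * y), (r * z).
  by rewrite mulrDr; split; [apply: (lidealMl I_ideal) | apply: (lidealMl K_ideal) |].
Qed.

Lemma left_ideal_meet I K : left_ideal I -> left_ideal K -> left_ideal (fun x => I x /\ K x).
Proof.
move=> I_ideal K_ideal; split.
- by split; [apply: (lideal0 I_ideal) | apply: (lideal0 K_ideal)].
- by move=> x y [Ix Kx] [Iy Ky]; split; [apply: (lidealD I_ideal) | apply: (lidealD K_ideal)].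
- by move=> r x [Ix Kx]; split; [apply: (lidealMl I_ideal) | apply: (lidealMl K_ideal)].
Qed.

End LeftIdeals.

Lemma descending_chain_le (T : Type) (I : nat -> T -> Prop) :
  (forall n x, I n.+1 x -> I n x) -> forall n m x, (n <= m)%N -> I m x -> I n x.
Proof.
move=> Idesc n m x; elim: m => [|m IHm]; first by rewrite leqn0 => /eqP ->.
by rewrite leq_eqVlt => /orP [/eqP -> // | /IHm Inx] /Idesc.
Qed.

Definition included (T : Type) (A B : T -> Prop) := forall x, A x -> B x.

Section Noetherian.
Variable R : nzRingType.
Hypothesis R_noeth : left_noetherian R.

Lemma no_strict_ascending_chain (C : nat -> R -> Prop) :
  (forall n, left_ideal (C n)) -> (forall n x, C n x -> C n.+1 x) ->
  ~ (forall n, exists x, C n.+1 x /\ ~ C n x).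
Proof.
move=> C_ideal C_asc C_strict; have [n Cn] := R_noeth C_ideal C_asc.
by have [x [Cn1x]] := C_strict n; apply; apply/(Cn n.+1).
Qed.

Lemma maximal_left_ideal_between (K L0 : R -> Prop) :
  left_ideal K -> left_ideal L0 -> included L0 K -> (exists x, K x /\ ~ L0 x) ->
  exists L, [/\ left_ideal L, included L0 L, included L K, (exists x, K x /\ ~ L x) &
     forall I, left_ideal I -> included L I -> included I K -> included I L \/ included K I].
Proof.
move=> K_ideal L0_ideal L0K [x0 [Kx0 L0x0]]; apply: NNPP => no_max.
pose between L := [/\ left_ideal L, included L0 L, included L K & exists x, K x /\ ~ L x].
have grow L : exists L', between L ->
    between L' /\ included L L' /\ exists x, L' x /\ ~ L x.
  case: (classic (between L)) => [[L_ideal L0L LK LK_strict] | ]; last by exists L.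
  apply: NNPP => no_grow; apply: no_max; exists L; split => // I I_ideal LI IK.
  case: (classic (included I L)) => [|IL]; [by left | right => x Kx].
  apply: NNPP => Ix; apply: no_grow; exists I => _.
  split; first by split => //; [move=> y /L0L /LI | exists x].
  split => //; apply: NNPP => IL'; apply: IL => y Iy; apply: NNPP => Ly; apply: IL'.
  by exists y.
have [next nextP] := choice _ grow.
pose C n := iter n next L0.
have C_between n : between (C n).
  elim: n => [|n IHn]; first by split => //; exists x0.
  by have [] := nextP _ IHn.
apply: (@no_strict_ascending_chain C) => [n | n x | n]; first by case: (C_between n).
- by have [_ [+ _]] := nextP _ (C_between n); apply.
- by have [_ [_]] := nextP _ (C_between n).
Qed.

End Noetherian.

Definition left_bezout (S : nzRingType) := forall a b : S,
  exists c, [/\ exists r s, c = r * a + s * b, exists r, a = r * c & exists r, b = r * c].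

Lemma left_bezout_principal (S : nzRingType) :
  left_noetherian S -> left_bezout S -> principal_left_ideal_ring S.
Proof.
move=> S_noeth S_bezout I I_ideal; apply: NNPP => I_nonprincipal.
have escape a : exists x, I a -> I x /\ ~ lspan1 a x.
  apply: NNPP => none; apply: I_nonprincipal; exists a => x; split => [Ix | [r ->]].
    by apply: NNPP => ax; apply: none; exists x.
  by apply: (lidealMl I_ideal); apply: NNPP => Ia; apply: none; exists 0 => /Ia.
have [g gP] := choice _ escape.
have [gcd gcdP] := choice _ (fun ab : S * S => S_bezout ab.1 ab.2).
pose A n := iter n (fun a => gcd (a, g a)) 0.
have IA n : I (A n).
  elim: n => [|n IHn] /=; first exact: lideal0 I_ideal.
  have [[r [s ->]] _ _] := gcdP (A n, g (A n)).
  have [Ig _] := gP _ IHn.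
  by apply: (lidealD I_ideal); apply: (lidealMl I_ideal).
apply: (no_strict_ascending_chain S_noeth (C := fun n => lspan1 (A n))) => [n | n x | n].
- exact: left_ideal_lspan1.
- move=> [r ->] /=; have [_ [t Et] _] := gcdP (A n, g (A n)).
  by exists (r * t); rewrite -mulrA -Et.
- exists (g (A n)); split; last by case: (gP _ (IA n)).
  by have [_ _ [t Et]] := gcdP (A n, g (A n)); exists t.
Qed.

Definition right_comparable (R : nzRingType) (a b : R) :=
  (exists r, a = b * r) \/ (exists r, b = a * r).

Lemma right_comparable_left_bezout (R : nzRingType) :
  (forall a b : R, right_comparable a b) -> left_bezout R^c.
Proof.
move=> R_chain a b; have [[r ab] | [r ba]] := R_chain a b.
- by exists b; split; [exists 0, 1 | exists r | exists 1]; rewrite ?mul0r ?mul1r ?add0r.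
- by exists a; split; [exists 1, 0 | exists 1 | exists r]; rewrite ?mul0r ?mul1r ?addr0.
Qed.

Definition stationary (S : nzRingType) (L : nat -> S -> Prop) :=
  exists n, forall m, (n <= m)%N -> same_set (L m) (L n).

Lemma not_stationary_strict_subseq (S : nzRingType) (V : nat -> S -> Prop) :
  (forall m x, V m.+1 x -> V m x) -> ~ stationary V ->
  exists (a : nat -> nat) (x : nat -> S),
    (forall i, (a i <= a i.+1)%N) /\ forall i, V (a i) (x i) /\ ~ V (a i.+1) (x i).
Proof.
move=> V_desc V_nstat.
have drop n : exists mx : nat * S, [/\ (n <= mx.1)%N, V n mx.2 & ~ V mx.1 mx.2].
  apply: NNPP => none; apply: V_nstat; exists n => m lenm x.
  split; first exact: descending_chain_le.
  by move=> Vnx; apply: NNPP => Vmx; apply: none; exists (m, x).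
have [next nextP] := choice _ drop.
pose a i := iter i (fun n => (next n).1) 0.
exists a, (fun i => (next (a i)).2); split => i; first by case: (nextP (a i)).
by case: (nextP (a i)).
Qed.

Section ArtinianFiltration.
Variables (S : nzRingType) (Q : nat -> S -> Prop).
Hypotheses (S_noeth : left_noetherian S) (Q_ideal : forall k, left_ideal (Q k))
  (Q_desc : forall k x, Q k.+1 x -> Q k x)
  (Q_layer : forall r, (exists s, s * r = 1) \/ (forall k x, Q k x -> Q k.+1 (r * x))).

Definition dcc_below (P : S -> Prop) := forall L : nat -> S -> Prop,
  (forall m, left_ideal (L m)) -> (forall m x, L m.+1 x -> L m x) ->
  (forall m x, L m x -> P x) -> stationary L.

(* The span [W i] of [Q k.+1] and [x 0, ..., x i.-1] meets [U i] only inside [Q k.+1],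
   since on the layer [Q k / Q k.+1] left-invertible elements act injectively and all
   others act by zero; hence the [W i] ascend strictly. *)
Lemma layer_no_strict_descent k (U : nat -> S -> Prop) (x : nat -> S) :
  (forall i, left_ideal (U i)) -> (forall i y, U i.+1 y -> U i y) ->
  (forall i y, Q k.+1 y -> U i y) -> (forall i y, U i y -> Q k y) ->
  ~ (forall i, U i (x i) /\ ~ U i.+1 (x i)).
Proof.
move=> U_ideal U_desc QU UQ x_strict.
pose W := fix W i : S -> Prop :=
  if i is i'.+1 then fun y => exists w r, W i' w /\ y = w + r * x i' else Q k.+1.
have W_ideal i : left_ideal (W i).
  elim: i => [|i [W0 WD WM]] /=; first exact: Q_ideal.
  split; first by exists 0, 0; rewrite mul0r addr0.
  - move=> _ _ [w1 [r1 [W1 ->]]] [w2 [r2 [W2 ->]]]; exists (w1 + w2), (r1 + r2).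
    by rewrite mulrDl addrACA; split => //; apply: WD.
  - move=> r _ [w [s [Ww ->]]]; exists (r * w), (r * s).
    by rewrite mulrDr mulrA; split => //; apply: WM.
have WUQ i y : W i y -> U i y -> Q k.+1 y.
  elim: i y => [//|i IHi] _ [w [r [Ww ->]]] Uy.
  have [Uxi Uxi1] := x_strict i.
  have Uw : U i w.
    rewrite -(addrK (r * x i) w); apply: (lidealB (U_ideal i)); first exact: U_desc.
    exact: (lidealMl (U_ideal i)).
  have Qw : Q k.+1 w := IHi w Ww Uw.
  have [[s sr1] | r_layer] := Q_layer r; last first.
    by apply: (lidealD (Q_ideal k.+1)) => //; apply: r_layer; apply: UQ Uxi.
  case: Uxi1; rewrite -[x i]mul1r -sr1 -mulrA; apply: (lidealMl (U_ideal i.+1)).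
  rewrite -(addKr w (r * x i)); apply: (lidealD (U_ideal i.+1)) => //.
  by apply: (lidealN (U_ideal i.+1)); apply: QU.
apply: (no_strict_ascending_chain S_noeth (C := W)) => // [i y Wy | i].
  by exists y, 0; rewrite mul0r addr0.
have [Uxi Uxi1] := x_strict i; exists (x i); split.
  by exists 0, 1; rewrite mul1r add0r; split => //; apply: lideal0.
by move=> Wx; apply: Uxi1; apply: QU; apply: WUQ Wx Uxi.
Qed.

Lemma layer_stationary k (L : nat -> S -> Prop) :
  (forall m, left_ideal (L m)) -> (forall m x, L m.+1 x -> L m x) ->
  (forall m x, L m x -> Q k x) ->
  stationary (fun m x => exists y z, [/\ L m y, Q k.+1 z & x = y + z]).
Proof.
move=> L_ideal L_desc LQ; set V := fun m x => _.
have V_ideal m : left_ideal (V m) := left_ideal_add (L_ideal m) (Q_ideal k.+1).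
have V_desc m x : V m.+1 x -> V m x.
  by move=> [y [z [Ly Qz ->]]]; exists y, z; split => //; apply: L_desc.
apply: NNPP => /(not_stationary_strict_subseq V_desc) [a [x [a_mono x_strict]]].
apply: (layer_no_strict_descent (k := k) (U := fun i => V (a i)) _ _ _ _ x_strict) => //.
- by move=> i y; apply: descending_chain_le V_desc _ _ _ (a_mono i).
- by move=> i y Qy; exists 0, y; rewrite add0r; split => //; apply: lideal0 (L_ideal _).
- by move=> i _ [y [z [Ly Qz ->]]]; apply: (lidealD (Q_ideal k)); [apply: LQ Ly | apply: Q_desc].
Qed.

Lemma dcc_below_step k : dcc_below (Q k.+1) -> dcc_below (Q k).
Proof.
move=> dcc_k1 L L_ideal L_desc LQ.
have [n1 n1P] := dcc_k1 (fun m x => L m x /\ Q k.+1 x)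
  (fun m => left_ideal_meet (L_ideal m) (Q_ideal k.+1))
  (fun m x Lx => conj (L_desc m x Lx.1) Lx.2) (fun m x Lx => Lx.2).
have [n2 n2P] := layer_stationary L_ideal L_desc LQ.
exists (maxn n1 n2) => m lem x; split; first exact: descending_chain_le.
move=> Lx; have [le1 le2] : (n1 <= maxn n1 n2)%N /\ (n2 <= maxn n1 n2)%N.
  by rewrite leq_maxl leq_maxr.
have [y [z [Ly Qz xE]]] : exists y z, [/\ L m y, Q k.+1 z & x = y + z].
  apply/(n2P m (leq_trans le2 lem)); apply/(n2P _ le2).
  by exists x, 0; rewrite addr0; split => //; apply: lideal0 (Q_ideal _).
have Lmaxz : L (maxn n1 n2) z.
  rewrite -(addKr y z) -xE addrC; apply: (lidealB (L_ideal _)) => //.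
  exact: descending_chain_le lem Ly.
have [Lmz _] : L m z /\ Q k.+1 z.
  by apply/(n1P m (leq_trans le1 lem)); apply/(n1P _ le1).
by rewrite xE; apply: (lidealD (L_ideal m)).
Qed.

Lemma filtration_left_artinian N :
  (forall x, Q 0 x) -> (forall x, Q N x -> x = 0) -> left_artinian S.
Proof.
move=> Q0 QN.
have dcc d k : (k + d)%N = N -> dcc_below (Q k).
  elim: d k => [k | d IHd k kdN]; last by apply: dcc_below_step; apply: IHd; rewrite addSnnS.
  rewrite addn0 => -> L L_ideal _ LQ; exists 0 => m _ x.
  by split => Lx; rewrite (QN _ (LQ _ _ Lx)); apply: lideal0 (L_ideal _).
by move=> L L_ideal L_desc; apply: (dcc N 0 (add0n N) L L_ideal L_desc) => m x _; apply: Q0.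
Qed.

End ArtinianFiltration.

(* If [K / L] is a simple module, the annihilator of any nonzero [x + L] is maximal. *)
Lemma colon_maximal_left_ideal (S : nzRingType) (K L : S -> Prop) x :
  left_ideal K -> left_ideal L -> included L K ->
  (forall I, left_ideal I -> included L I -> included I K -> included I L \/ included K I) ->
  K x -> ~ L x -> maximal_left_ideal (fun r => L (r * x)).
Proof.
move=> K_ideal L_ideal LK L_max Kx Lx.
have colon_ideal : left_ideal (fun r => L (r * x)).
  split; first by rewrite mul0r; apply: lideal0 L_ideal.
  - by move=> r s Lr Ls; rewrite mulrDl; apply: (lidealD L_ideal).
  - by move=> r s Ls; rewrite -mulrA; apply: (lidealMl L_ideal).
split=> // [|I I_ideal colonI]; first by rewrite mul1r.
pose Ix := fun z => exists i, I i /\ z = i * x.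
have Ix_ideal : left_ideal Ix.
  split; first by exists 0; rewrite mul0r; split => //; apply: lideal0 I_ideal.
  - move=> _ _ [i [Ii ->]] [j [Ij ->]]; exists (i + j).
    by rewrite mulrDl; split => //; apply: (lidealD I_ideal).
  - move=> r _ [i [Ii ->]]; exists (r * i).
    by rewrite mulrA; split => //; apply: (lidealMl I_ideal).
pose IxL := fun z => exists y w, [/\ Ix y, L w & z = y + w].
have L_IxL : included L IxL.
  move=> z Lz; exists 0, z; rewrite add0r; split => //.
  by exists 0; rewrite mul0r; split => //; apply: lideal0 I_ideal.
have IxL_K : included IxL K.
  move=> _ [y [z [[i [Ii ->]] Lz ->]]].
  by apply: (lidealD K_ideal); [apply: (lidealMl K_ideal) | apply: LK].
case: (L_max _ (left_ideal_add Ix_ideal L_ideal) L_IxL IxL_K) => [IxLL | KIxL].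
- left => r; split=> [Ir|]; last exact: colonI.
  apply: IxLL; exists (r * x), 0; rewrite addr0.
  by split => //; [exists r | apply: lideal0 L_ideal].
- right; have [_ [z [[i [Ii ->]] Lz xE]]] := KIxL x Kx.
  have : I (1 - i) by apply: colonI; rewrite mulrBl mul1r {1}xE addrC addKr.
  by move/(lidealD I_ideal Ii); rewrite addrC subrK.
Qed.

(** * Local rings *)

Section Units.
Variable R : nzRingType.

Definition is_unit (x : R) := exists y, y * x = 1 /\ x * y = 1.

Lemma is_unit1 : is_unit 1. Proof. by exists 1; rewrite mulr1. Qed.

Lemma is_unitM u v : is_unit u -> is_unit v -> is_unit (u * v).
Proof.
move=> [u' [u'u uu']] [v' [v'v vv']]; exists (v' * u'); split.
- by rewrite mulrA -(mulrA v') u'u mulr1.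
- by rewrite mulrA -(mulrA u) vv' mulr1.
Qed.

Lemma is_unit_rreg0 u x : is_unit u -> x * u = 0 -> x = 0.
Proof. by move=> [u' [_ uu']] xu0; rewrite -[x]mulr1 -uu' mulrA xu0 mul0r. Qed.

Lemma is_unit_scaler_eq0 (M : lmodType R) u (v : M) : is_unit u -> u *: v = 0 -> v = 0.
Proof. by move=> [u' [u'u _]] uv0; rewrite -[v]scale1r -u'u -scalerA uv0 scaler0. Qed.

End Units.

Lemma right_comparable_unit (R : nzRingType) (a b d x y : R) :
  a = d * x -> b = d * y -> is_unit x \/ is_unit y -> right_comparable a b.
Proof.
move=> -> -> [[x' [x'x xx']] | [y' [y'y yy']]].
- by right; exists (x' * y); rewrite mulrA -(mulrA d) xx' mulr1.
- by left; exists (y' * x); rewrite mulrA -(mulrA d) yy' mulr1.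
Qed.

Definition pX_ideal (R : nzRingType) (p : R) k x := exists y, x = p ^+ k * y.

Lemma pX_ideal_desc (R : nzRingType) (p : R) k x : pX_ideal p k.+1 x -> pX_ideal p k x.
Proof. by move=> [y ->]; exists (p * y); rewrite exprSr mulrA. Qed.

Lemma pX_right_ideal (R : nzRingType) (p : R) k : @left_ideal R^c (pX_ideal p k).
Proof.
split; first by exists 0; rewrite mulr0.
- by move=> _ _ [y ->] [z ->]; exists (y + z); rewrite mulrDr.
- by move=> r _ [y ->]; exists (y * r : R); rewrite [RHS]mulrA.
Qed.

(* Stationarity of the right annihilators of [p ^+ n] makes [⋂ p^n R] p-divisible. *)
Lemma pX_meet_divisible (R : nzRingType) (p x : R) : right_noetherian R ->
  (forall n, pX_ideal p n x) -> exists w, (forall n, pX_ideal p n w) /\ x = p * w.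
Proof.
move=> R_rnoeth x_div; pose A n (z : R) := p ^+ n * z = 0.
have [n0 n0P] : exists n0, forall m, (n0 <= m)%N -> same_set (A m) (A n0).
  apply: R_rnoeth => [n | n z]; last by rewrite /A exprS -mulrA => ->; rewrite mulr0.
  split; first by rewrite /A mulr0.
  - by move=> u v; rewrite /A mulrDr => -> ->; rewrite addr0.
  - by move=> r z; rewrite /A mulrA => ->; rewrite mul0r.
have [y yP] := choice _ x_div.
pose w m := p ^+ n0 * y (n0 + m)%N.
have wS m : w m = p * w m.+1.
  have : A (n0 + m)%N (y (n0 + m)%N - p * y (n0 + m.+1)%N).
    by rewrite /A mulrBr mulrA -exprSr -addnS -!yP subrr.
  move/(n0P _ (leq_addr m n0)); rewrite /A mulrBr => /subr0_eq wE.
  by rewrite /w wE !mulrA -exprSr exprS.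
have w1 n : w 1 = p ^+ n * w n.+1.
  by elim: n => [|n ->]; [rewrite expr0 mul1r | rewrite wS mulrA -exprSr].
by exists (w 1); split=> [n | ]; [exists (w n.+1) | rewrite -wS /w addn0 -yP].
Qed.

Section LocalRing.
Variables (R : nzRingType) (J : R -> Prop).
Hypotheses (J_max : maximal_left_ideal J)
  (J_unique : forall N, maximal_left_ideal N -> same_set N J)
  (R_noeth : left_noetherian R).

Lemma J_left_ideal : left_ideal J. Proof. by case: J_max. Qed.

Lemma J_neq1 : ~ J 1. Proof. by case: J_max. Qed.

Lemma J_no_left_inverse x y : J x -> y * x <> 1.
Proof. by move=> Jx yx1; apply: J_neq1; rewrite -yx1; apply: (lidealMl J_left_ideal). Qed.

Lemma proper_left_ideal_in_J I : left_ideal I -> ~ I 1 -> included I J.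
Proof.
move=> I_ideal I1; have top_ideal : left_ideal (fun _ : R => True) by [].
have [L [L_ideal IL _ [x [_ Lx]] L_max]] :=
  maximal_left_ideal_between R_noeth top_ideal I_ideal (fun _ _ => Logic.I)
    (ex_intro _ 1 (conj Logic.I I1)).
have L1 : ~ L 1 by move=> L1; apply: Lx; rewrite -[x]mulr1; apply: (lidealMl L_ideal).
have L_maximal : maximal_left_ideal L.
  split=> // I' I'_ideal LI'.
  case: (L_max I' I'_ideal LI' (fun _ _ => Logic.I)) => [I'L | I'_top].
  - by left => y; split; [apply: I'L | apply: LI'].
  - by right; apply: I'_top.
by move=> y /IL /(J_unique L_maximal).
Qed.

Lemma notin_J_left_inverse x : ~ J x -> exists y, y * x = 1.
Proof.
move=> Jx; case: (classic (lspan1 x 1)) => [[y /esym yx1] | Rx1]; first by exists y.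
case: Jx; apply: (proper_left_ideal_in_J (left_ideal_lspan1 x) Rx1).
by exists 1; rewrite mul1r.
Qed.

Lemma notin_J_unit x : ~ J x -> is_unit x.
Proof.
move=> Jx; have [s sx1] := notin_J_left_inverse Jx.
have Js : ~ J s.
  move=> Js; have Jxs : J (x * s) by apply: (lidealMl J_left_ideal).
  have J1xs : ~ J (1 - x * s).
    by move=> J1xs; apply: J_neq1; rewrite -(subrK (x * s) 1); apply: (lidealD J_left_ideal).
  have [t t1xs] := notin_J_left_inverse J1xs.
  have x0 : x = 0.
    by rewrite -[x]mul1r -t1xs -mulrA mulrBl mul1r -mulrA sx1 mulr1 subrr mulr0.
  by move: sx1; rewrite x0 mulr0 => /esym/eqP; rewrite oner_eq0.
have [t ts1] := notin_J_left_inverse Js.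
have tx : t = x by rewrite -[t]mulr1 -sx1 mulrA ts1 mul1r.
by exists s; rewrite -{2}tx.
Qed.

Lemma J_or_unit x : J x \/ is_unit x.
Proof. by case: (classic (J x)) => Jx; [left | right; apply: notin_J_unit]. Qed.

Lemma unit_notin_J u : is_unit u -> ~ J u.
Proof. by move=> [v [vu _]] Ju; apply: J_no_left_inverse Ju vu. Qed.

Lemma J_mulr x r : J x -> J (x * r).
Proof.
move=> Jx; apply: NNPP => /notin_J_left_inverse [t txr1].
have [|[v [vr rv]]] := J_or_unit r.
  by move=> Jr; apply: (J_no_left_inverse Jr (y := t * x)); rewrite -mulrA.
have txv : t * x = v by rewrite -[t * x]mulr1 -rv mulrA -(mulrA t) txr1 mul1r.
by apply: (J_no_left_inverse Jx (y := r * t)); rewrite -mulrA txv.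
Qed.

Lemma J_twosided : twosided_ideal J.
Proof.
split; first exact: J_left_ideal.
by split; [apply: (lideal0 J_left_ideal) | apply: (lidealD J_left_ideal) | move=> r x /J_mulr].
Qed.

Lemma is_unitBJ u j : is_unit u -> J j -> is_unit (u - j).
Proof.
move=> Uu Jj; apply: notin_J_unit => Jdiff; apply: (unit_notin_J Uu).
by rewrite -(subrK j u); apply: (lidealD J_left_ideal).
Qed.

Section PairQuotientDecomposition.
Local Notation R2 := (R^o * R^o)%type.
Variables a b : R.
Hypotheses (Ja : J a) (Jb : J b).
Local Notation v := ((a, b) : R2).
Local Notation N := (cyclic_submodule v).
Variables (ms : seq (quot N)) (ss tt : seq R).
Hypothesis ms_indep : cyclics_direct ms.
Hypotheses (e1_decomp : qpi N (1, 0) = \sum_(j < size ms) ss`_j *: ms`_j)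
  (e2_decomp : qpi N (0, 1) = \sum_(j < size ms) tt`_j *: ms`_j).
Local Notation w j := (val ms`_j : R2).
Local Notation c j := (a * ss`_j + b * tt`_j).

Lemma pair_comparable_of_unit u : is_unit u -> u *: v = 0 -> right_comparable a b.
Proof.
by move=> Uu /(is_unit_scaler_eq0 Uu) /(congr1 fst) /= ->; left; exists 0; rewrite mulr0.
Qed.

Lemma qpi_pair_decomp (x y : R) :
  qpi N (x, y) = \sum_(j < size ms) (x * ss`_j + y * tt`_j) *: ms`_j.
Proof. by rewrite (pair_basis x y) qpiD !qpiZ e1_decomp e2_decomp scaler_sum2. Qed.

(* [a e1 + b e2 = 0] in the quotient, so each term [c j *: ms`_j] vanishes. *)
Lemma decomp_coef_lift : exists k : nat -> R,
  forall j, (j < size ms)%N -> c j *: w j = k j *: v.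
Proof.
apply: (choice (fun j g => (j < size ms)%N -> c j *: w j = g *: v)) => j.
case: (ltnP j (size ms)) => [ltj | _]; last by exists 0.
suff [g gP] : N (c j *: w j) by exists g.
apply/(qpi_eq0 N); rewrite qpiZ qpiK.
apply: (@direct_sum_termP _ _ _ ms_indep (fun j => c j)) => //.
by rewrite -qpi_pair_decomp; apply/qpi_eq0; exists 1; rewrite scale1r.
Qed.

Lemma decomp_identity :
  exists z, J z /\ v = \sum_(j < size ms) c j *: w j + z *: v.
Proof.
have lift_basis e (cs : seq R) : qpi N e = \sum_(j < size ms) cs`_j *: ms`_j ->
    exists k, e - \sum_(j < size ms) cs`_j *: w j = k *: v.
  by move=> e_decomp; apply/(qpi_eq0 N); rewrite qpiB qpi_lincomb e_decomp subrr.
have [k0 k0P] := lift_basis _ _ e1_decomp; have [k1 k1P] := lift_basis _ _ e2_decomp.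
exists (a * k0 + b * k1); split.
  by apply: (lidealD J_left_ideal); apply: J_mulr.
rewrite [LHS]pair_basis -(subrK (\sum_(j < size ms) ss`_j *: w j) (1, 0)) k0P.
rewrite -(subrK (\sum_(j < size ms) tt`_j *: w j) (0, 1)) k1P !scalerDr !scalerA addrACA.
by rewrite (scaler_sum2 _ (fun j => ss`_j) (fun j => tt`_j) (fun j => w j)) scalerDl addrC.
Qed.

Lemma decomp_term_trivial i : (i < size ms)%N -> J (w i).1 -> J (w i).2 -> ms`_i = 0.
Proof.
move=> lti Jw1 Jw2; set z : R := (w i).1 * ss`_i + (w i).2 * tt`_i.
have Jz : J z by apply: (lidealD J_left_ideal); apply: J_mulr.
apply: (is_unit_scaler_eq0 (is_unitBJ (is_unit1 R) Jz)).
pose f j : R := ((j : nat) == i)%:R - ((w i).1 * ss`_j + (w i).2 * tt`_j).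
have := direct_sum_termP ms_indep (f := f) _ lti; rewrite /f eqxx; apply.
under eq_bigr do rewrite scalerBl.
by rewrite sumrB sum_scale_delta // -qpi_pair_decomp -surjective_pairing qpiK subrr.
Qed.

Lemma decomp_unit_coef i k : (i < size ms)%N -> is_unit k -> c i *: w i = k *: v ->
  right_comparable a b.
Proof.
move=> lti Uk kE; have [k' [k'k _]] := Uk.
have v_wi : v = (k' * c i) *: w i by rewrite -scalerA kE scalerA k'k scale1r.
have [Jw1 | Uw1] := J_or_unit (w i).1; last first.
  by apply: (right_comparable_unit (congr1 fst v_wi) (congr1 snd v_wi)); left.
have [Jw2 | Uw2] := J_or_unit (w i).2; last first.
  by apply: (right_comparable_unit (congr1 fst v_wi) (congr1 snd v_wi)); right.
have [g wiE] : N (w i) by apply/(qpi_eq0 N); rewrite qpiK decomp_term_trivial.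
have Jcg : J (c i * g) by apply: J_mulr; apply: (lidealD J_left_ideal); apply: J_mulr.
apply: (pair_comparable_of_unit (is_unitBJ Uk Jcg)).
by rewrite scalerBl -kE wiE scalerA subrr.
Qed.

Lemma decomp_coefs_in_J (k : nat -> R) :
  (forall j, (j < size ms)%N -> c j *: w j = k j *: v) ->
  (forall j, (j < size ms)%N -> J (k j)) -> right_comparable a b.
Proof.
move=> kE kJ; have [z [Jz vE]] := decomp_identity.
have Jsum : J (\sum_(j < size ms) k j + z).
  by apply: (lidealD J_left_ideal) => //; apply: (lideal_sum J_left_ideal) => j; apply: kJ.
apply: (pair_comparable_of_unit (is_unitBJ (is_unit1 R) Jsum)).
rewrite scalerBl scale1r scalerDl scaler_suml.
by rewrite -(eq_bigr _ (fun (j : 'I_(size ms)) _ => kE j (ltn_ord j))) -vE subrr.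
Qed.

End PairQuotientDecomposition.

Section RightChain.
Hypothesis R_decomp : two_generated_decomposable R.

Lemma J_right_comparable a b : J a -> J b -> right_comparable a b.
Proof.
move=> Ja Jb; pose N := cyclic_submodule ((a, b) : R^o * R^o).
have [ms [ms_span ms_indep]] := R_decomp (quot_pair_two_generated N).
have [ss [_ e1_decomp]] := ms_span (qpi N (1, 0)).
have [tt [_ e2_decomp]] := ms_span (qpi N (0, 1)).
have [k kE] := decomp_coef_lift ms_indep e1_decomp e2_decomp.
have [[i [lti /notin_J_unit Uki]] | kJ] := classic (exists i, (i < size ms)%N /\ ~ J (k i)).
  by apply: (decomp_unit_coef Ja Jb ms_indep e1_decomp e2_decomp lti Uki); apply: kE.
apply: (decomp_coefs_in_J Ja Jb e1_decomp e2_decomp kE) => j ltj.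
by apply: NNPP => Jkj; apply: kJ; exists j.
Qed.

Lemma local_right_comparable (a b : R) : right_comparable a b.
Proof.
have [Ja | [a' [a'a aa']]] := J_or_unit a; last first.
  by right; exists (a' * b); rewrite mulrA aa' mul1r.
have [Jb | [b' [b'b bb']]] := J_or_unit b; last first.
  by left; exists (b' * a); rewrite mulrA bb' mul1r.
exact: J_right_comparable.
Qed.

End RightChain.

Section Uniformizer.
Hypothesis R_rnoeth : right_noetherian R.
Variable p : R.
Hypothesis J_gen : forall x, J x <-> exists r, x = p * r.

Lemma J_p : J p. Proof. by apply/J_gen; exists 1; rewrite mulr1. Qed.

Lemma pX_lmul k r : exists s, r * p ^+ k = p ^+ k * s.
Proof.
elim: k r => [|k IHk] r; first by exists r; rewrite expr0 mulr1 mul1r.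
have [s sP] := IHk r; have [t tP] : exists t, s * p = p * t.
  by apply/J_gen; apply: (lidealMl J_left_ideal); apply: J_p.
by exists t; rewrite exprSr mulrA sP -mulrA tP mulrA -exprSr.
Qed.

Lemma pX_left_ideal k : left_ideal (pX_ideal p k).
Proof.
split; first by exists 0; rewrite mulr0.
- by move=> _ _ [y ->] [z ->]; exists (y + z); rewrite mulrDr.
- by move=> r _ [y ->]; have [s sP] := pX_lmul k r; exists (s * y); rewrite mulrA sP mulrA.
Qed.

Lemma pX_layer_left r :
  (exists s, s * r = 1) \/ forall k x, pX_ideal p k x -> pX_ideal p k.+1 (r * x).
Proof.
have [/J_gen [t ->] | [s [sr _]]] := J_or_unit r; last by left; exists s.
right=> k _ [y ->]; have [s sP] := pX_lmul k t.
by exists (s * y); rewrite -mulrA (mulrA t) sP !mulrA -exprS.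
Qed.

Lemma pX_layer_right r :
  (exists s, r * s = 1) \/ forall k x, pX_ideal p k x -> pX_ideal p k.+1 (x * r).
Proof.
have [/J_gen [t ->] | [s [_ rs]]] := J_or_unit r; last by left; exists s.
right=> k _ [y ->]; have /J_gen [u yt] : J (y * (p * t)).
  by apply: (lidealMl J_left_ideal); apply/J_gen; exists t.
by exists u; rewrite -mulrA yt mulrA -exprSr.
Qed.

Lemma nilpotent_artinian N : p ^+ N = 0 -> artinian R.
Proof.
move=> pXN.
have pX0 x : pX_ideal p 0 x by exists x; rewrite expr0 mul1r.
have pXN0 x : pX_ideal p N x -> x = 0 by move=> [y ->]; rewrite pXN mul0r.
split.
- exact: (filtration_left_artinian R_noeth pX_left_ideal (@pX_ideal_desc _ p)
    pX_layer_left pX0 pXN0).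
- exact: (@filtration_left_artinian R^c _ R_rnoeth (pX_right_ideal p) (@pX_ideal_desc _ p)
    pX_layer_right N pX0 pXN0).
Qed.

(* Krull intersection theorem: a left ideal [L] maximal below [K := ⋂ p^n R] would have
   [J K ⊆ L], while [K = p K ⊆ J K]. *)
Lemma pX_meet0 x : (forall n, pX_ideal p n x) -> x = 0.
Proof.
move=> Kx; apply: NNPP => x0; pose K y := forall n, pX_ideal p n y.
have K_ideal : left_ideal K.
  split; first by move=> n; apply: lideal0 (pX_left_ideal n).
  - by move=> y z Ky Kz n; apply: (lidealD (pX_left_ideal n)).
  - by move=> r y Ky n; apply: (lidealMl (pX_left_ideal n)).
have zero_ideal : left_ideal (fun y : R => y = 0).
  by split=> [|y z -> ->|r y ->]; rewrite ?addr0 ?mulr0.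
have zeroK : included (fun y : R => y = 0) K by move=> _ -> n; apply: lideal0 (pX_left_ideal n).
have [L [L_ideal _ LK [y [Ky Ly]] L_max]] :=
  maximal_left_ideal_between R_noeth K_ideal zero_ideal zeroK (ex_intro _ x (conj Kx x0)).
have [w [Kw yE]] := pX_meet_divisible R_rnoeth Ky.
have Lw : ~ L w by move=> Lw; apply: Ly; rewrite yE; apply: (lidealMl L_ideal).
have colon_max := colon_maximal_left_ideal K_ideal L_ideal LK L_max Kw Lw.
by apply: Ly; rewrite yE; apply/(J_unique colon_max); apply: J_p.
Qed.

Lemma pX_unit_decomp x : x <> 0 -> exists k u, is_unit u /\ x = p ^+ k * u.
Proof.
move=> x0; have [n xn] : exists n, ~ pX_ideal p n x.
  apply: NNPP => none; apply: x0; apply: pX_meet0 => n.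
  by apply: NNPP => xn; apply: none; exists n.
elim: n xn => [|n IHn] xn; first by case: xn; exists x; rewrite expr0 mul1r.
have [[y yE] | ] := classic (pX_ideal p n x); last exact: IHn.
have [/J_gen [t yt] | Uy] := J_or_unit y; last by exists n, y.
by case: xn; exists t; rewrite yE yt mulrA -exprSr.
Qed.

Section NonNilpotent.
Hypothesis p_nnil : ~ exists N, p ^+ N = 0.

Lemma unit_mul_p u : is_unit u -> exists v, is_unit v /\ u * p = p * v.
Proof.
move=> [u' [u'u uu']].
have /J_gen [v uE] : J (u * p) by apply: (lidealMl J_left_ideal); apply: J_p.
exists v; split => //; have [/J_gen [t vt] | //] := J_or_unit v; exfalso.
have /J_gen [t' u'E] : J (u' * p) by apply: (lidealMl J_left_ideal); apply: J_p.
have pE : p = p * (t' * p * t).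
  by rewrite -{1}[p]mul1r -u'u -mulrA uE vt mulrA u'E !mulrA.
have Jt : J (t' * p * t) by apply: J_mulr; apply: (lidealMl J_left_ideal); apply: J_p.
apply: p_nnil; exists 1%N; rewrite expr1; apply: (is_unit_rreg0 (is_unitBJ (is_unit1 R) Jt)).
by rewrite mulrBr mulr1 -pE subrr.
Qed.

Lemma unit_mul_pX k u : is_unit u -> exists v, is_unit v /\ u * p ^+ k = p ^+ k * v.
Proof.
elim: k u => [|k IHk] u Uu; first by exists u; rewrite expr0 mulr1 mul1r.
have [v [Uv uE]] := IHk u Uu; have [v' [Uv' vE]] := unit_mul_p Uv.
by exists v'; rewrite exprSr mulrA uE -mulrA vE mulrA.
Qed.

Lemma nonnilpotent_domain (x y : R) : x * y = 0 -> x = 0 \/ y = 0.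
Proof.
move=> xy0; apply: NNPP => /not_or_and [x0 y0].
have [k [u [Uu xE]]] := pX_unit_decomp x0; have [l [v [Uv yE]]] := pX_unit_decomp y0.
have [u' [Uu' uE]] := unit_mul_pX l Uu.
apply: p_nnil; exists (k + l)%N; apply: (is_unit_rreg0 (is_unitM Uu' Uv)).
by rewrite -xy0 xE yE exprD -!mulrA (mulrA u) uE !mulrA.
Qed.

End NonNilpotent.

End Uniformizer.

End LocalRing.

(** * Domains *)

Section Domain.
Variable R : nzRingType.
Hypotheses (R_noeth : left_noetherian R)
  (R_domain : forall x y : R, x * y = 0 -> x = 0 \/ y = 0).

(* If [Ra ∩ Rb = 0], the left ideals [Rb + Rba + ... + Rba^n] ascend strictly. *)
Lemma left_ore (a b : R) : a <> 0 -> b <> 0 -> exists r s, r * a = s * b /\ r * a <> 0.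
Proof.
move=> a0 b0; apply: NNPP => no_common.
have common0 r s : r * a = s * b -> r = 0.
  move=> rasb; apply: NNPP => r0; apply: no_common.
  by exists r, s; split => // /R_domain [/r0 | /a0].
pose I := fix I n : R -> Prop :=
  if n is n'.+1 then fun x => exists r y, I n' y /\ x = r * b + y * a else lspan1 b.
have I_ideal n : left_ideal (I n).
  elim: n => [|n IHn] /=; first exact: left_ideal_lspan1.
  split; first by exists 0, 0; rewrite !mul0r addr0; split => //; apply: lideal0 IHn.
  - move=> _ _ [r [y [Iy ->]]] [s [z [Iz ->]]]; exists (r + s), (y + z).
    by rewrite !mulrDl addrACA; split => //; apply: (lidealD IHn).
  - move=> t _ [r [y [Iy ->]]]; exists (t * r), (t * y).
    by rewrite mulrDr !mulrA; split => //; apply: (lidealMl IHn).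
have I_asc n x : I n x -> I n.+1 x.
  elim: n x => [|n IHn] x /=.
    by move=> [r ->]; exists r, 0; rewrite mul0r addr0; split => //; exists 0; rewrite mul0r.
  by move=> [r [y [Iy ->]]]; exists r, y; split => //; apply: IHn.
apply: (no_strict_ascending_chain R_noeth I_ideal I_asc) => n.
exists (b * a ^+ n.+1); split.
  elim: n => [|n IHn].
    by exists 0, b; rewrite expr1 mul0r add0r; split => //; exists 1; rewrite mul1r.
  by exists 0, (b * a ^+ n.+1); split => //; rewrite mul0r add0r [in LHS]exprSr mulrA.
elim: n => [[r] | n IHn [r [y [Iy yE]]]]; first by rewrite expr1 => /common0 /b0.
apply: IHn; have /common0 /subr0_eq -> // : (b * a ^+ n.+1 - y) * a = r * b.
by rewrite mulrBl -mulrA -exprSr yE addrK.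
Qed.

Section ImageDecomposition.
Variables (V : lmodType R) (f : {linear V -> R^o}).
Local Notation phi := (@quot_lift _ _ _ f).
Variable ms : seq (quot (kernel f)).
Hypothesis ms_indep : cyclics_direct ms.

Lemma image_decomp_coef (cs : seq R) e :
  qpi (kernel f) e = \sum_(j < size ms) cs`_j *: ms`_j ->
  f e = \sum_(j < size ms) cs`_j * phi ms`_j.
Proof.
by move=> eE; rewrite -(quot_lift_qpi f e) eE linear_sum; apply: eq_bigr => j _; rewrite linearZ.
Qed.

(* By the Ore condition two nonzero images have a nonzero common left multiple,
   which the independence of the summands forbids. *)
Lemma image_decomp_support i j : (i < size ms)%N -> (j < size ms)%N ->
  phi ms`_i <> 0 -> phi ms`_j <> 0 -> i = j.
Proof.
move=> lti ltj phi_i phi_j; apply: NNPP => /eqP neij.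
have [r [s [rs_eq rs0]]] := left_ore phi_i phi_j.
have comb0 : r *: ms`_i + (- s) *: ms`_j = 0.
  apply: quot_lift_eq0; rewrite linearD !linearZ.
  by change (r * phi ms`_i + - s * phi ms`_j = 0); rewrite mulNr rs_eq subrr.
apply: rs0; have := congr1 phi (direct_sum_pair ms_indep lti ltj neij comb0).
by rewrite linearZ linear0 => rphi0; exact: rphi0.
Qed.

Lemma image_decomp_sum (cs : seq R) i : (i < size ms)%N -> phi ms`_i <> 0 ->
  \sum_(j < size ms) cs`_j * phi ms`_j = cs`_i * phi ms`_i.
Proof.
move=> lti phi_i; rewrite (bigD1 (Ordinal lti)) //= big1 ?addr0 // => l neli.
case: (classic (phi ms`_l = 0)) => [-> | phi_l]; first by rewrite mulr0.
by case/eqP: neli; apply: val_inj; apply: image_decomp_support phi_l phi_i.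
Qed.

End ImageDecomposition.

Lemma domain_left_bezout : two_generated_decomposable R -> left_bezout R.
Proof.
move=> R_decomp a b; have [-> | a0] := classic (a = 0).
  by exists b; split; [exists 0, 1 | exists 0 | exists 1]; rewrite ?mul0r ?mul1r ?add0r.
pose f : {linear (R^o * R^o)%type -> R^o} := comb2 a b.
have [ms [ms_span ms_indep]] := R_decomp _ (quot_pair_two_generated (kernel f)).
have [ss [_ e1]] := ms_span (qpi _ (1, 0)); have [tt [_ e2]] := ms_span (qpi _ (0, 1)).
have aE : a = \sum_(j < size ms) ss`_j * quot_lift ms`_j.
  by rewrite -(image_decomp_coef e1) /= /comb2 /= mul1r mul0r addr0.
have bE : b = \sum_(j < size ms) tt`_j * quot_lift ms`_j.
  by rewrite -(image_decomp_coef e2) /= /comb2 /= mul1r mul0r add0r.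
have [i [lti phi_i]] : exists i, (i < size ms)%N /\ quot_lift ms`_i <> 0.
  apply: NNPP => none; apply: a0; rewrite aE big1 // => j _.
  case: (classic (quot_lift ms`_j = 0)) => [-> | phi_j]; first by rewrite mulr0.
  by case: none; exists j.
exists (quot_lift ms`_i); split; [by exists (val ms`_i).1, (val ms`_i).2 | | ].
- by exists ss`_i; rewrite [LHS]aE (image_decomp_sum ms_indep _ lti phi_i).
- by exists tt`_i; rewrite [LHS]bE (image_decomp_sum ms_indep _ lti phi_i).
Qed.

End Domain.

Lemma domain_prime_ring (R : nzRingType) :
  (forall x y : R, x * y = 0 -> x = 0 \/ y = 0) -> prime_ring R.
Proof.
move=> R_domain A B _ _ AB0; case: (classic (exists a, A a /\ a <> 0)) => [[a [Aa a0]] | noA].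
  by right=> b Bb; have [/a0 | ] := R_domain _ _ (AB0 a b Aa Bb).
by left=> a Aa; apply: NNPP => a0; apply: noA; exists a.
Qed.

Theorem theorem2p8 (R : nzRingType) :
  local_ring R -> noetherian R ->
  (forall M : lmodType R, two_generated M -> direct_sum_of_cyclics M) ->
  (artinian R /\ principal_left_ideal_ring R) \/
  (artinian R /\ principal_right_ideal_ring R) \/
  (prime_ring R /\
   forall I : R -> Prop, twosided_ideal I -> principal_left I /\ principal_right I).
Proof.
move=> [J [J_max J_unique]] [R_lnoeth R_rnoeth] R_decomp.
have R_chain := local_right_comparable J_max J_unique R_lnoeth R_decomp.
have PR : principal_right_ideal_ring R :=
  left_bezout_principal (S := R^c) R_rnoeth (right_comparable_left_bezout R_chain).
have [p J_gen] := PR J (J_twosided J_max J_unique R_lnoeth).2.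
have [[N pN0] | p_nnil] := classic (exists N, p ^+ N = 0).
  by right; left; split; first exact: (nilpotent_artinian J_max J_unique R_lnoeth R_rnoeth J_gen pN0).
have R_domain := nonnilpotent_domain J_max J_unique R_lnoeth R_rnoeth J_gen p_nnil.
have PL := left_bezout_principal R_lnoeth (domain_left_bezout R_lnoeth R_domain R_decomp).
right; right; split; first exact: domain_prime_ring.
by move=> I [I_left I_right]; split; [apply: PL | apply: PR].
Qed.
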